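(* Let $G=(V,E)$ be a finite connected graph, $q\ge1$ and $0\le p\le p'\le1$. Then $\mathbb P^{G,p}\preceq\mathbb P^{G,p'}$, i.e. $\mathbb P^{G,p}(A)\le\mathbb P^{G,p'}(A)$ for every increasing event $A\subset\{1,q\}^E$.
   Context: Graph Laplacian for $c:E\to(0,\infty)$: $\Delta_cf(x)=\sum_{e=\{x,y\}\in E}c_e(f(x)-f(y))$ on $H_0=\{f:V\to\mathbb R:\sum_xf(x)=0\}$, determinant $\det\Delta_c>0$. For $\kappa\in\{1,q\}^E$: $h(\kappa)=\#\{e:\kappa_e=q\}$, $s(\kappa)=\#\{e:\kappa_e=1\}$. $\mathbb P^{G,p}(\kappa)=Z^{-1}p^{h(\kappa)}(1-p)^{s(\kappa)}(\det\Delta_\kappa)^{-1/2}$ (with convention $0^0=1$). An event is increasing if its indicator is increasing for the coordinatewise order ($1<q$). *)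

From HB Require Import structures.
From mathcomp Require Import all_boot all_order all_algebra.
Set Implicit Arguments. Unset Strict Implicit. Unset Printing Implicit Defensive.
Import Order.TTheory GRing.Theory Num.Theory.
Local Open Scope ring_scope.

(* A finite graph: vertex type V, edge type E, each edge e has endpoints
   src e and tgt e (the orientation is irrelevant: e = {src e, tgt e}). *)

Definition simple_graph (V E : finType) (src tgt : E -> V) : Prop :=
  (forall e, src e != tgt e) /\
  (forall e e', [set src e; tgt e] = [set src e'; tgt e'] -> e = e').

Definition adjacent (V E : finType) (src tgt : E -> V) : rel V :=
  fun x y => [exists e, ((src e == x) && (tgt e == y)) || ((src e == y) && (tgt e == x))].

Definition connected_graph (V E : finType) (src tgt : E -> V) : Prop :=
  forall x y : V, connect (adjacent src tgt) x y.

Definition lap_op (R : ringType) (V E : finType) (src tgt : E -> V)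
  (c : E -> R) (f : V -> R) (x : V) : R :=
  \sum_(e | src e == x) c e * (f x - f (tgt e)) +
  \sum_(e | tgt e == x) c e * (f x - f (src e)).

(* det of Delta_c restricted to H_0 = {f : sum f = 0}.  Since Delta_c maps
   into H_0 and kills constants, it equals the determinant of the operator
   Delta_c + (1/|V|) J (J = all-ones matrix), which acts as Delta_c on H_0
   and as the identity on the constants (V = H_0 (+) constants). *)
Definition detLap (R : fieldType) (V E : finType) (src tgt : E -> V)
  (c : E -> R) : R :=
  \det (\matrix_(i < #|V|, j < #|V|)
          (lap_op src tgt c (fun v => ((v == enum_val j) : bool)%:R) (enum_val i)
           + (#|V|%:R)^-1)).

(* configurations kappa in {1,q}^E, encoded as bool (true <-> kappa_e = q) *)
Definition conductance (R : ringType) (E : finType) (q : R) (k : {ffun E -> bool})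
  : E -> R := fun e => if k e then q else 1.

Definition h_count (E : finType) (k : {ffun E -> bool}) : nat := #|[set e | k e]|.
Definition s_count (E : finType) (k : {ffun E -> bool}) : nat := #|[set e | ~~ k e]|.

(* unnormalized weight p^h (1-p)^s (det Delta_kappa)^(-1/2); 0^0 = 1 *)
Definition weight (R : rcfType) (V E : finType) (src tgt : E -> V) (q p : R)
  (k : {ffun E -> bool}) : R :=
  p ^+ h_count k * (1 - p) ^+ s_count k
  / Num.sqrt (detLap src tgt (conductance q k)).

Definition prob (R : rcfType) (V E : finType) (src tgt : E -> V) (q p : R)
  (A : pred {ffun E -> bool}) : R :=
  (\sum_(k | A k) weight src tgt q p k) / (\sum_k weight src tgt q p k).

(* coordinatewise order on {1,q}^E with 1 < q *)
Definition increasing_event (E : finType) (A : pred {ffun E -> bool}) : Prop :=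
  forall k k' : {ffun E -> bool}, (forall e, k e ==> k' e) -> A k -> A k'.

From HB Require Import structures.
From mathcomp Require Import all_boot all_order all_algebra.
From mathcomp Require Import ring.
Set Implicit Arguments. Unset Strict Implicit. Unset Printing Implicit Defensive.
Import Order.TTheory GRing.Theory Num.Theory.
Local Open Scope ring_scope.

(* With X the set of edges of conductance q, the weight of X is the Bernoulli
   product p^|X| (1-p)^|E\X| times det(D_X)^(-1/2), where D_X is the Laplacian
   made invertible by adding J/|V|.  Raising the conductance of an edge e from 1
   to q adds the rank-one term (q-1) u_e u_e^T, and by the matrix determinant
   lemma two such positive updates of a symmetric positive definite M satisfy
   det(M + A + B) det M <= det(M + A) det(M + B).  This local inequality
   propagates to log-submodularity of X |-> det D_X on all of 2^E, so the weights
   for p <= p' satisfy Holley's condition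
     w_p(X) w_p'(Y) <= w_p'(X u Y) w_p(X n Y),
   and the Ahlswede-Daykin four functions theorem turns it into stochastic
   domination. *)

Section BilinearForm.
Variable R : fieldType.

Definition bform n (u : 'rV[R]_n) (A : 'M[R]_n) (v : 'rV[R]_n) : R :=
  (u *m A *m v^T) 0 0.

Lemma bformC n (u v : 'rV[R]_n) (A : 'M[R]_n) :
  A^T = A -> bform u A v = bform v A u.
Proof.
move=> sA; rewrite /bform -[u *m A *m v^T]trmxK [in LHS]mxE.
by rewrite !trmx_mul trmxK sA mulmxA.
Qed.

Lemma bformDmx n (u v : 'rV[R]_n) (A B : 'M[R]_n) :
  bform u (A + B) v = bform u A v + bform u B v.
Proof. by rewrite /bform mulmxDr mulmxDl mxE. Qed.

Lemma bformZmx n (u v : 'rV[R]_n) a (A : 'M[R]_n) :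
  bform u (a *: A) v = a * bform u A v.
Proof. by rewrite /bform -scalemxAr -scalemxAl mxE. Qed.

Lemma bform_summx n (u v : 'rV[R]_n) (I : finType) (F : I -> 'M[R]_n) :
  bform u (\sum_i F i) v = \sum_i bform u (F i) v.
Proof. by rewrite /bform mulmx_sumr mulmx_suml summxE. Qed.

Lemma bform_const_mx n (x : 'rV[R]_n) k :
  bform x (const_mx k) x = k * (\sum_i x 0 i) ^+ 2.
Proof.
rewrite /bform mxE expr2 mulrA mulr_sumr; apply: eq_bigr => j _.
rewrite !mxE mulr_sumr; congr (_ * _); apply: eq_bigr => i _.
by rewrite mxE mulrC.
Qed.

Lemma bform_rank1 n (x u : 'rV[R]_n) : bform x (u^T *m u) x = (x *m u^T) 0 0 ^+ 2.
Proof.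
rewrite /bform !mulmxA -mulmxA [LHS]mxE big_ord1 expr2; congr (_ * _).
by rewrite -[u]trmxK -trmx_mul mxE trmxK.
Qed.

Lemma bform1 n (x : 'rV[R]_n) : bform x 1%:M x = \sum_i x 0 i ^+ 2.
Proof. by rewrite /bform mulmx1 mxE; apply: eq_bigr => i _; rewrite mxE expr2. Qed.

End BilinearForm.

Section LowRankUpdate.
Variable R : fieldType.

Lemma det_1DmulmxC n k (X : 'M[R]_(n, k)) (Y : 'M[R]_(k, n)) :
  \det (1%:M + X *m Y) = \det (1%:M + Y *m X).
Proof.
have eL : block_mx 1%:M (- X) Y 1%:M =
    block_mx 1%:M 0 Y 1%:M *m block_mx 1%:M (- X) 0 (1%:M + Y *m X).
  by rewrite mulmx_block !mul1mx !mul0mx !mulmx1 ?add0r ?addr0 mulmxN addrC addrK.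
have eR : block_mx 1%:M (- X) Y 1%:M =
    block_mx (1%:M + X *m Y) (- X) 0 1%:M *m block_mx 1%:M 0 Y 1%:M.
  by rewrite mulmx_block !mul1mx !mul0mx !mulmx1 mulmx0 ?add0r ?addr0 mulNmx addrK.
have := congr1 determinant eR.
by rewrite eL !det_mulmx det_lblock !det_ublock !det1 !mul1r !mulr1.
Qed.

Lemma det_addmx_mul n k (M : 'M[R]_n) (B : 'M[R]_(n, k)) (C : 'M[R]_(k, n)) :
  M \in unitmx -> \det (M + B *m C) = \det M * \det (1%:M + C *m invmx M *m B).
Proof.
move=> uM; have -> : M + B *m C = M *m (1%:M + invmx M *m B *m C).
  by rewrite mulmxDr mulmx1 !mulmxA mulmxV // mul1mx.
by rewrite det_mulmx (det_1DmulmxC (invmx M *m B)) mulmxA.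
Qed.

Lemma det_block_mx11 (a b c d : 'M[R]_1) :
  \det (block_mx a b c d) = a 0 0 * d 0 0 - b 0 0 * c 0 0.
Proof.
rewrite (expand_det_row _ (lshift 1 0)) big_split_ord /= !big_ord1.
rewrite /cofactor !det_mx11 !mxE.
have -> : lift (lshift 1 (0 : 'I_1)) 0 = rshift 1 (0 : 'I_1) by apply/val_inj.
have -> : lift (rshift 1 (0 : 'I_1)) 0 = lshift 1 (0 : 'I_1) by apply/val_inj.
rewrite !(unsplitK (inl (0 : 'I_1)) : split (lshift 1 (0 : 'I_1)) = inl 0).
rewrite !(unsplitK (inr (0 : 'I_1)) : split (rshift 1 (0 : 'I_1)) = inr 0).
by rewrite !row_mxEl !row_mxEr /= expr0 expr1 !mul1r mulN1r mulrN.
Qed.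

Lemma mx11_1DZ (a : R) (X : 'M[R]_1) : (1%:M + a *: X) 0 0 = 1 + a * X 0 0.
Proof. by rewrite !mxE. Qed.

Lemma det_rank1_update n (M : 'M[R]_n) (u : 'rV_n) a : M \in unitmx ->
  \det (M + a *: (u^T *m u)) = \det M * (1 + a * bform u (invmx M) u).
Proof.
by move=> uM; rewrite scalemxAl det_addmx_mul // det_mx11 -scalemxAr mx11_1DZ.
Qed.

Lemma det_rank2_update n (M : 'M[R]_n) (u v : 'rV_n) a b : M \in unitmx ->
  \det (M + a *: (u^T *m u) + b *: (v^T *m v)) = \det M *
    ((1 + a * bform u (invmx M) u) * (1 + b * bform v (invmx M) v)
     - (b * bform u (invmx M) v) * (a * bform v (invmx M) u)).
Proof.
move=> uM; rewrite -addrA !scalemxAl -mul_row_col det_addmx_mul //.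
rewrite mul_col_mx mul_col_row (scalar_mx_block 1 1) add_block_mx det_block_mx11.
by rewrite -!scalemxAr !add0r !mx11_1DZ ![((_ *: _ : 'M_1)) 0 0]mxE.
Qed.

End LowRankUpdate.

Lemma det_rank1_updates_submod (R : realFieldType) n (M : 'M[R]_n) (u v : 'rV_n) a b :
  M \in unitmx -> M^T = M -> 0 <= a -> 0 <= b ->
  \det (M + a *: (u^T *m u) + b *: (v^T *m v)) * \det M <=
  \det (M + a *: (u^T *m u)) * \det (M + b *: (v^T *m v)).
Proof.
move=> uM sM a0 b0; rewrite det_rank2_update // !det_rank1_update //.
rewrite (bformC v u) ?trmx_inv ?sM // -subr_ge0.
set x := bform u _ v.
rewrite (_ : _ - _ = \det M ^+ 2 * (a * b) * x ^+ 2); last by ring.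
by rewrite mulr_ge0 ?sqr_ge0 // mulr_ge0 ?sqr_ge0 // mulr_ge0.
Qed.

Section PositiveDefinite.
Variable R : realFieldType.

Definition posdef n (A : 'M[R]_n) := forall x : 'rV_n, x != 0 -> 0 < bform x A x.

Lemma posdef1 n : posdef (1%:M : 'M[R]_n).
Proof.
move=> x nx; have x2_ge0 i : true -> 0 <= x 0 i ^+ 2 by rewrite sqr_ge0.
rewrite bform1 lt_def sumr_ge0 // andbT.
apply: contra nx => /eqP x0; apply/eqP/rowP => i; rewrite mxE.
by apply/eqP; rewrite -sqrf_eq0 (psumr_eq0P x2_ge0 x0).
Qed.

Lemma posdef_lerp n (A B : 'M[R]_n) t : posdef A -> posdef B -> 0 <= t <= 1 ->
  posdef ((1 - t) *: A + t *: B).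
Proof.
move=> pA pB /andP[t0 t1] x nx; rewrite bformDmx !bformZmx.
have [->|tn0] := eqVneq t 0; first by rewrite subr0 mul1r mul0r addr0; apply: pA.
apply: ltr_wpDl; first by rewrite mulr_ge0 ?subr_ge0 // ltW ?pA.
by rewrite mulr_gt0 ?pB // lt_def tn0.
Qed.

Lemma posdef_det_neq0 n (A : 'M[R]_n) : posdef A -> \det A != 0.
Proof.
move=> pA; apply/negP => /det0P[x nx xA].
by have := pA x nx; rewrite /bform xA mul0mx mxE ltxx.
Qed.

End PositiveDefinite.

Lemma det_posdef_gt0 (R : rcfType) n (A : 'M[R]_n) : posdef A -> 0 < \det A.
Proof.
(* det ((1 - t) 1 + t A) equals 1 at t = 0 and cannot vanish on [0, 1], where
   the segment stays positive definite. *)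
move=> pA; pose B t : 'M[R]_n := (1 - t) *: 1%:M + t *: A.
pose P : {poly R} :=
  \det ((1 - 'X) *: (1%:M : 'M[{poly R}]_n) + 'X *: map_mx polyC A).
have PE t : P.[t] = \det (B t).
  rewrite -horner_evalE -det_map_mx; congr (\det _); apply/matrixP => i j.
  by rewrite !mxE /= horner_evalE !hornerE; case: (i == j); rewrite /= ?hornerE.
rewrite ltNge; apply/negP => A_le0.
have [|t t01] := @poly_ivt R (- P) 0 1 ler01.
  rewrite !hornerN !PE /B subr0 subrr !scale0r !scale1r addr0 add0r det1.
  by rewrite oppr_le0 ler01 oppr_ge0.
apply/negP; rewrite /root hornerN oppr_eq0 PE.
exact/posdef_det_neq0/posdef_lerp/t01/pA/posdef1.
Qed.

Lemma lap_op_edge_entry (R : comPzRingType) (T : eqType) (x y s t : T) (c : R) :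
  (if s == x then c * ((x == y)%:R - (t == y)%:R) else 0) +
  (if t == x then c * ((x == y)%:R - (s == y)%:R) else 0) =
  c * (((x == s)%:R - (x == t)%:R) * ((y == s)%:R - (y == t)%:R)).
Proof.
rewrite ![_ == x]eq_sym ![_ == y]eq_sym.
by case: (eqVneq x s) => [<-|xs]; case: (eqVneq x t) => [<-|xt];
  rewrite ?eqxx ?(negbTE xs) ?(negbTE xt) /=; ring.
Qed.

Section LaplacianMatrix.
Variables (R : realFieldType) (V E : finType) (src tgt : E -> V).
Local Notation n := #|V|.

Definition edge_vec (e : E) : 'rV[R]_n :=
  \row_i ((enum_val i == src e)%:R - (enum_val i == tgt e)%:R).

Definition lap_mx (c : E -> R) : 'M[R]_n :=
  const_mx n%:R^-1 + \sum_e c e *: ((edge_vec e)^T *m edge_vec e).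

Lemma detLap_lap_mx c : detLap src tgt c = \det (lap_mx c).
Proof.
congr (\det _); apply/matrixP => i j; rewrite !mxE summxE addrC; congr (_ + _).
rewrite /lap_op !(big_mkcond (fun e => _ == _)) -big_split /=.
by apply: eq_bigr => e _; rewrite lap_op_edge_entry !mxE big_ord1 !mxE.
Qed.

Lemma lap_mx_tr c : (lap_mx c)^T = lap_mx c.
Proof.
rewrite /lap_mx raddfD /= trmx_const raddf_sum /=; congr (_ + _).
by apply: eq_bigr => e _; rewrite linearZ /= trmx_mul trmxK.
Qed.

Lemma lap_mx_update (c c' : E -> R) e0 a :
  (forall e, c' e = c e + (e == e0)%:R * a) ->
  lap_mx c' = lap_mx c + a *: ((edge_vec e0)^T *m edge_vec e0).
Proof.
move=> c'E; rewrite /lap_mx -addrA; congr (_ + _).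
under eq_bigr do rewrite c'E scalerDl.
rewrite big_split /=; congr (_ + _).
rewrite (bigD1 e0) //= eqxx mul1r big1 ?addr0 // => e /negbTE ->.
by rewrite mul0r scale0r.
Qed.

Lemma edge_vec_coord (x : 'rV[R]_n) e :
  (x *m (edge_vec e)^T) 0 0 = x 0 (enum_rank (src e)) - x 0 (enum_rank (tgt e)).
Proof.
have coord v : \sum_i x 0 i * (enum_val i == v)%:R = x 0 (enum_rank v).
  rewrite (bigD1 (enum_rank v)) //= enum_rankK eqxx mulr1 big1 ?addr0 // => i ne.
  by rewrite (_ : (enum_val i == v) = false) ?mulr0 //; apply: contraNF ne => /eqP <-;
    rewrite enum_valK.
by rewrite mxE -!coord -sumrB; apply: eq_bigr => i _; rewrite !mxE mulrBr.
Qed.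

Lemma bform_lap_mx x c : bform x (lap_mx c) x = n%:R^-1 * (\sum_i x 0 i) ^+ 2 +
  \sum_e c e * (x 0 (enum_rank (src e)) - x 0 (enum_rank (tgt e))) ^+ 2.
Proof.
rewrite bformDmx bform_const_mx bform_summx; congr (_ + _).
by apply: eq_bigr => e _; rewrite bformZmx bform_rank1 edge_vec_coord.
Qed.

Lemma lap_mx_posdef c : connected_graph src tgt -> (forall e, 0 < c e) ->
  posdef (lap_mx c).
Proof.
move=> conn c_gt0 x nx; pose xv v := x 0 (enum_rank v).
have edge_ge0 e : true -> 0 <= c e * (xv (src e) - xv (tgt e)) ^+ 2.
  by rewrite mulr_ge0 ?sqr_ge0 ?ltW.
have mean_ge0 : 0 <= n%:R^-1 * (\sum_i x 0 i) ^+ 2.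
  by rewrite mulr_ge0 ?invr_ge0 ?ler0n ?sqr_ge0.
rewrite bform_lap_mx lt_def addr_ge0 ?sumr_ge0 // andbT.
apply: contra nx; rewrite paddr_eq0 ?sumr_ge0 // => /andP[/eqP mean0 /eqP edges0].
have xv_edge e : xv (src e) = xv (tgt e).
  move: (psumr_eq0P edge_ge0 edges0 (i := e) isT) => /eqP.
  by rewrite mulf_eq0 gt_eqF //= sqrf_eq0 subr_eq0 => /eqP.
have xv_const v w : xv v = xv w.
  have cl : closed (adjacent src tgt) [pred u | xv u == xv w].
    by move=> a b /existsP[e /orP[]/andP[/eqP <- /eqP <-]]; rewrite !inE xv_edge.
  by have := closed_connect cl (conn v w); rewrite !inE eqxx => /eqP.
apply/eqP/rowP => i; rewrite mxE.
have n_neq0 : n%:R != 0 :> R by rewrite pnatr_eq0 -lt0n (leq_ltn_trans _ (ltn_ord i)).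
have sumE : \sum_j x 0 j = n%:R * x 0 i.
  rewrite (eq_bigr (fun=> x 0 i)) ?sumr_const ?card_ord ?mulr_natl // => j _.
  by have := xv_const (enum_val j) (enum_val i); rewrite /xv !enum_valK.
move/eqP: mean0; rewrite sumE mulf_eq0 invr_eq0 (negbTE n_neq0) sqrf_eq0 mulf_eq0.
by rewrite (negbTE n_neq0) => /eqP.
Qed.

End LaplacianMatrix.

Arguments edge_vec {R V E} src tgt e.

Lemma ler_pM_cross (R : numDomainType) (a1 a2 b1 b2 x y : R) :
  0 <= a1 -> 0 <= a2 -> 0 < x -> 0 < y ->
  a1 * x <= b1 * y -> a2 * y <= b2 * x -> a1 * a2 <= b1 * b2.
Proof.
move=> a1_ge0 a2_ge0 x_gt0 y_gt0 h1 h2.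
rewrite -(ler_pM2r (mulr_gt0 x_gt0 y_gt0)).
have := ler_pM (mulr_ge0 a1_ge0 (ltW x_gt0)) (mulr_ge0 a2_ge0 (ltW y_gt0)) h1 h2.
by rewrite mulrACA [b1 * y * _]mulrACA [y * x]mulrC.
Qed.

Section LocalToGlobalSubmodularity.
Variables (R : numDomainType) (T : finType) (F : {set T} -> R).
Hypothesis F_gt0 : forall X, 0 < F X.
Hypothesis F_submod2 : forall (Z : {set T}) e g, e != g -> e \notin Z -> g \notin Z ->
  F (g |: (e |: Z)) * F Z <= F (e |: Z) * F (g |: Z).

Lemma submod_setU1 (Z W : {set T}) e : Z \subset W -> e \notin W ->
  F (e |: W) * F Z <= F W * F (e |: Z).
Proof.
have [k] := ubnP #|W :\: Z|; elim: k Z => // k IH Z ltWZ sZW eW.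
have [/eqP|[g gWZ]] := set_0Vmem (W :\: Z).
  rewrite setD_eq0 => sWZ; have -> : W = Z by apply/eqP; rewrite eqEsubset sWZ.
  by rewrite mulrC.
move: (gWZ); rewrite inE => /andP[gZ gW].
have eg : e != g by apply: contraNneq eW => ->.
have eZ : e \notin Z by apply: contraNN eW; apply: subsetP.
have ltWgZ : (#|W :\: (g |: Z)| < k)%N.
  by move: ltWZ; rewrite (cardsD1 g) gWZ setUC -setDDl.
have sgZW : g |: Z \subset W by rewrite subUset sub1set gW.
have := IH _ ltWgZ sgZW eW; rewrite setUCA => h.
apply: (ler_pM_cross (ltW (F_gt0 _)) (ltW (F_gt0 _)) (F_gt0 _) (F_gt0 _) h).
by rewrite mulrC F_submod2.
Qed.

Lemma submod_setUI (X Y : {set T}) : F (X :|: Y) * F (X :&: Y) <= F X * F Y.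
Proof.
have [k] := ubnP #|Y :\: X|; elim: k X Y => // k IH X Y ltYX.
have [/eqP|[e eYX]] := set_0Vmem (Y :\: X).
  by rewrite setD_eq0 => sYX; rewrite (setUidPl sYX) (setIidPr sYX).
move: (eYX); rewrite inE => /andP[eX eY].
set Y' := Y :\ e.
have ltY'X : (#|Y' :\: X| < k)%N.
  by move: ltYX; rewrite (cardsD1 e) eYX /Y' setDDl setUC -setDDl.
have h1 := IH X Y' ltY'X.
have eXY' : e \notin X :|: Y' by rewrite !inE eqxx negb_or eX.
have h2 := submod_setU1 (subsetUr X Y') eXY'.
rewrite setUCA !setD1K // in h2.
have XY'E : X :&: Y' = X :&: Y.
  by apply/setP => z; rewrite !inE; case: eqP => // ->; rewrite (negbTE eX).
rewrite XY'E mulrC in h1; rewrite [F (X :|: Y') * _]mulrC in h2.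
rewrite [F X * _]mulrC.
exact: (ler_pM_cross (ltW (F_gt0 _)) (ltW (F_gt0 _)) (F_gt0 _) (F_gt0 _) h2).
Qed.

End LocalToGlobalSubmodularity.

Lemma four_functions_2pt (R : numDomainType) (a0 a1 b0 b1 c0 c1 d0 d1 : R) :
  0 <= a0 -> 0 <= a1 -> 0 <= b0 -> 0 <= b1 -> 0 <= c0 -> 0 <= c1 -> 0 <= d0 -> 0 <= d1 ->
  a0 * b0 <= c0 * d0 -> a0 * b1 <= c1 * d0 -> a1 * b0 <= c1 * d0 -> a1 * b1 <= c1 * d1 ->
  (a0 + a1) * (b0 + b1) <= (c0 + c1) * (d0 + d1).
Proof.
move=> a0_ge0 a1_ge0 b0_ge0 b1_ge0 c0_ge0 c1_ge0 d0_ge0 d1_ge0 h00 h01 h10 h11.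
suff cross : a0 * b1 + a1 * b0 <= c0 * d1 + c1 * d0.
  have -> : (a0 + a1) * (b0 + b1) = a0 * b0 + a1 * b1 + (a0 * b1 + a1 * b0) by ring.
  have -> : (c0 + c1) * (d0 + d1) = c0 * d0 + c1 * d1 + (c0 * d1 + c1 * d0) by ring.
  by apply: lerD => //; apply: lerD.
set m := c1 * d0 in h01 h10 *; set x := a0 * b1 in h01 *; set y := a1 * b0 in h10 *.
have /orP[/eqP m0|m_gt0] : (0 == m) || (0 < m) by rewrite -le_eqVlt mulr_ge0.
  by apply: le_trans (lerD h01 h10) _; rewrite -m0 !addr0 mulr_ge0.
have xy_le : x * y <= m * (c0 * d1).
  have -> : x * y = (a0 * b0) * (a1 * b1) by rewrite /x /y; ring.
  have -> : m * (c0 * d1) = (c0 * d0) * (c1 * d1) by rewrite /m; ring.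
  by rewrite ler_pM ?mulr_ge0.
rewrite -(ler_pM2l m_gt0); apply: (@le_trans _ _ (m * m + x * y)).
  have -> : m * m + x * y = m * (x + y) + (m - x) * (m - y) by ring.
  by rewrite lerDl mulr_ge0 ?subr_ge0.
by rewrite mulrDr [m * m + _]addrC lerD2r.
Qed.

Section FourFunctions.
Variables (R : numDomainType) (T : finType).

Lemma sum_powersetU1 (f : {set T} -> R) a (S : {set T}) : a \notin S ->
  \sum_(X in powerset (a |: S)) f X =
  \sum_(X in powerset S) (f X + f (a |: X)).
Proof.
move=> aS; rewrite big_split /= [LHS](bigID (fun X : {set T} => a \in X)) /= addrC.
congr (_ + _).
  by apply: eq_bigl => X; rewrite !powersetE -subsetD1 setU1K.
rewrite (reindex_onto (fun X => a |: X) (fun X => X :\ a)) /=; last first.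
  by move=> X /andP[_ aX]; rewrite setD1K.
apply: eq_bigl => X; rewrite !powersetE setU11 andbT.
have [aX|aX] := boolP (a \in X).
  rewrite (_ : X \subset S = false); last by apply: contraNF aS => /subsetP->.
  by rewrite (_ : _ :\ a == X = false) ?andbF //; apply: contraTF aX => /eqP <-;
    rewrite !inE eqxx.
rewrite setU1K // eqxx andbT subUset sub1set setU11 /=.
by rewrite -[in RHS](setU1K aS) subsetD1 aX andbT.
Qed.

Lemma four_functions (S : {set T}) (al be ga de : {set T} -> R) :
  (forall X, 0 <= al X) -> (forall X, 0 <= be X) ->
  (forall X, 0 <= ga X) -> (forall X, 0 <= de X) ->
  (forall X Y : {set T}, X \subset S -> Y \subset S ->
     al X * be Y <= ga (X :|: Y) * de (X :&: Y)) ->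
  (\sum_(X in powerset S) al X) * (\sum_(X in powerset S) be X) <=
  (\sum_(X in powerset S) ga X) * (\sum_(X in powerset S) de X).
Proof.
have [k] := ubnP #|S|; elim: k S al be ga de => // k IH S al be ga de ltSk.
move=> al_ge0 be_ge0 ga_ge0 de_ge0 H.
have [->|[a aS]] := set_0Vmem S.
  by rewrite powerset0 !big_set1; have := H _ _ (sub0set S) (sub0set S); rewrite setU0 set0I.
rewrite -(setD1K aS); set S' := S :\ a.
have aS' : a \notin S' by rewrite !inE eqxx.
rewrite !sum_powersetU1 //; apply: (IH S').
- by move: ltSk; rewrite (cardsD1 a) aS.
- by move=> X; rewrite addr_ge0.
- by move=> X; rewrite addr_ge0.
- by move=> X; rewrite addr_ge0.
- by move=> X; rewrite addr_ge0.
move=> X Y sXS' sYS'.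
have aX : a \notin X by apply: contraNN aS' => /(subsetP sXS').
have aY : a \notin Y by apply: contraNN aS' => /(subsetP sYS').
have sS'S : S' \subset S by apply: subD1set.
have sXS := subset_trans sXS' sS'S; have sYS := subset_trans sYS' sS'S.
have saXS : a |: X \subset S by rewrite subUset sub1set aS.
have saYS : a |: Y \subset S by rewrite subUset sub1set aS.
have I_aX : (a |: X) :&: Y = X :&: Y.
  by apply/setP => z; rewrite !inE; case: eqP => // ->; rewrite (negbTE aY) !andbF.
have I_aY : X :&: (a |: Y) = X :&: Y.
  by apply/setP => z; rewrite !inE; case: eqP => // ->; rewrite (negbTE aX).
apply: four_functions_2pt; rewrite ?H //.
- by have := H _ _ sXS saYS; rewrite I_aY setUCA.
- by have := H _ _ saXS sYS; rewrite I_aX -setUA.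
- by have := H _ _ saXS saYS; rewrite -setUIr setUACA setUid.
Qed.

End FourFunctions.

Section HolleyInequality.
Variables (R : realFieldType) (T : finType) (mu nu : {set T} -> R).
Hypotheses (mu_ge0 : forall X, 0 <= mu X) (nu_ge0 : forall X, 0 <= nu X).
Hypotheses (mu_gt0 : 0 < \sum_X mu X) (nu_gt0 : 0 < \sum_X nu X).
Hypothesis holley_cond : forall X Y, mu X * nu Y <= nu (X :|: Y) * mu (X :&: Y).

Lemma holley_cross (A : pred {set T}) :
  (forall X Y : {set T}, X \subset Y -> A X -> A Y) ->
  (\sum_(X | A X) mu X) * (\sum_(X | ~~ A X) nu X) <=
  (\sum_(X | A X) nu X) * (\sum_(X | ~~ A X) mu X).
Proof.
move=> A_incr.
have if_ge0 (b : bool) (x : R) : 0 <= x -> 0 <= if b then x else 0 by case: b.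
have sum_powersetT (P : pred {set T}) (f : {set T} -> R) :
    \sum_(X in powerset [set: T]) (if P X then f X else 0) = \sum_(X | P X) f X.
  by rewrite powersetT [RHS]big_mkcond; apply: eq_bigl => X; rewrite inE.
have := four_functions (S := [set: T])
  (al := fun X => if A X then mu X else 0) (be := fun X => if ~~ A X then nu X else 0)
  (ga := fun X => if A X then nu X else 0) (de := fun X => if ~~ A X then mu X else 0).
rewrite /= !sum_powersetT; apply=> [||||X Y _ _]; try by move=> Z; rewrite if_ge0.
case AX: (A X); last by rewrite mul0r mulr_ge0 ?if_ge0.
case nAY: (~~ A Y); last by rewrite mulr0 mulr_ge0 ?if_ge0.
rewrite (A_incr X) ?subsetUl //.
have -> : ~~ A (X :&: Y) by apply: contraNN nAY; apply: A_incr; apply: subsetIr.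
exact: holley_cond.
Qed.

Lemma holley_domination (A : pred {set T}) :
  (forall X Y : {set T}, X \subset Y -> A X -> A Y) ->
  (\sum_(X | A X) mu X) / (\sum_X mu X) <= (\sum_(X | A X) nu X) / (\sum_X nu X).
Proof.
move=> /holley_cross cross.
have splitE (f : {set T} -> R) :
    \sum_X f X = \sum_(X | A X) f X + \sum_(X | ~~ A X) f X := bigID A _ _.
move: mu_gt0 nu_gt0; rewrite !(splitE mu) !(splitE nu) => mu_gt0' nu_gt0'.
by rewrite ler_pdivrMr // mulrAC ler_pdivlMr // !mulrDr mulrC lerD2l.
Qed.

End HolleyInequality.

Section BernoulliProduct.
Variables (R : realFieldType) (T : finType).

Definition bernoulli_prod (r : R) (X : {set T}) : R :=
  \prod_e (if e \in X then r else 1 - r).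

Lemma bernoulli_prod_ge0 r X : 0 <= r <= 1 -> 0 <= bernoulli_prod r X.
Proof.
by case/andP=> r_ge0 r_le1; apply: prodr_ge0 => e _; case: ifP; rewrite ?subr_ge0.
Qed.

Lemma bernoulli_prod_gt0 r : 0 <= r <= 1 ->
  0 < bernoulli_prod r (if r == 1 then [set: T] else set0).
Proof.
case/andP=> _ r_le1; apply: prodr_gt0 => e _.
case: eqVneq => [->|r_neq1]; first by rewrite inE.
by rewrite inE subr_gt0 lt_def eq_sym r_neq1.
Qed.

Lemma bernoulli_prod_holley p p' (X Y : {set T}) : 0 <= p -> p <= p' -> p' <= 1 ->
  bernoulli_prod p X * bernoulli_prod p' Y <=
  bernoulli_prod p' (X :|: Y) * bernoulli_prod p (X :&: Y).
Proof.
move=> p_ge0 le_pp' p'_le1; have p'_ge0 := le_trans p_ge0 le_pp'.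
have p_le1 := le_trans le_pp' p'_le1.
rewrite -!big_split; apply: ler_prod => e _ /=.
rewrite mulr_ge0 /=; try by case: ifP; rewrite ?subr_ge0.
rewrite !inE; case: (e \in X); case: (e \in Y) => /=; try by rewrite mulrC.
by rewrite !mulrBr !mulr1 (mulrC p') lerD2r.
Qed.

End BernoulliProduct.

Section ConductanceModel.
Variables (R : rcfType) (V E : finType) (src tgt : E -> V) (q : R).
Hypotheses (conn : connected_graph src tgt) (q_ge1 : 1 <= q).

Definition config (X : {set E}) : {ffun E -> bool} := [ffun e => e \in X].

Lemma config_bij : bijective config.
Proof.
exists (fun k : {ffun E -> bool} => [set e | k e]).
  by move=> X; apply/setP => e; rewrite inE ffunE.
by move=> k; apply/ffunP => e; rewrite ffunE inE.
Qed.

Definition lap_det (X : {set E}) : R :=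
  \det (lap_mx src tgt (conductance q (config X))).

Lemma lap_det_gt0 (X : {set E}) : 0 < lap_det X.
Proof.
apply/det_posdef_gt0/lap_mx_posdef => // e; rewrite /conductance.
by case: (config X e) => //; apply: lt_le_trans q_ge1.
Qed.

Lemma lap_mx_config_setU1 (X : {set E}) e : e \notin X ->
  lap_mx src tgt (conductance q (config (e |: X))) =
  lap_mx src tgt (conductance q (config X)) +
  (q - 1) *: ((edge_vec src tgt e)^T *m edge_vec src tgt e).
Proof.
move=> eX; apply: lap_mx_update => g; rewrite /conductance !ffunE !inE.
by case: (eqVneq g e) => [->|_]; rewrite ?(negbTE eX) ?mul1r ?mul0r ?addr0 // addrC subrK.
Qed.

Lemma lap_det_submod2 (Z : {set E}) e g : e != g -> e \notin Z -> g \notin Z ->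
  lap_det (g |: (e |: Z)) * lap_det Z <= lap_det (e |: Z) * lap_det (g |: Z).
Proof.
move=> eg eZ gZ; have geZ : g \notin e |: Z by rewrite !inE negb_or eq_sym eg.
rewrite /lap_det !lap_mx_config_setU1 //.
apply: det_rank1_updates_submod; rewrite ?subr_ge0 ?lap_mx_tr //.
by rewrite unitmxE unitfE lt0r_neq0 // lap_det_gt0.
Qed.

Lemma weight_config r (X : {set E}) :
  weight src tgt q r (config X) = bernoulli_prod r X / Num.sqrt (lap_det X).
Proof.
rewrite /weight detLap_lap_mx /bernoulli_prod (bigID (mem X)) /=; congr (_ * _ / _).
  rewrite (eq_bigr (fun=> r)) => [|e ->//]; rewrite prodr_const /h_count.
  by congr (_ ^+ _); apply: eq_card => e; rewrite inE ffunE.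
rewrite (eq_bigr (fun=> 1 - r)) => [|e /negbTE ->//]; rewrite /s_count.
under eq_bigl do rewrite -in_setC.
by rewrite prodr_const; congr (_ ^+ _); apply: eq_card => e; rewrite !inE ffunE.
Qed.

Lemma weight_config_ge0 r (X : {set E}) :
  0 <= r <= 1 -> 0 <= weight src tgt q r (config X).
Proof. by move=> r01; rewrite weight_config divr_ge0 ?sqrtr_ge0 ?bernoulli_prod_ge0. Qed.

Lemma sum_weight_config_gt0 r :
  0 <= r <= 1 -> 0 < \sum_X weight src tgt q r (config X).
Proof.
move=> r01; rewrite (bigD1 (if r == 1 then [set: E] else set0)) //=.
rewrite ltr_pwDl ?sumr_ge0 // => [|X _]; last exact: weight_config_ge0.
by rewrite weight_config divr_gt0 ?sqrtr_gt0 ?lap_det_gt0 ?bernoulli_prod_gt0.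
Qed.

Lemma weight_config_holley p p' (X Y : {set E}) : 0 <= p -> p <= p' -> p' <= 1 ->
  weight src tgt q p (config X) * weight src tgt q p' (config Y) <=
  weight src tgt q p' (config (X :|: Y)) * weight src tgt q p (config (X :&: Y)).
Proof.
move=> p_ge0 le_pp' p'_le1; have p01 : 0 <= p <= 1 by rewrite p_ge0 (le_trans le_pp').
have det_ge0 Z : 0 <= lap_det Z := ltW (lap_det_gt0 Z).
have sqrt_gt0 Z : 0 < Num.sqrt (lap_det Z) by rewrite sqrtr_gt0 lap_det_gt0.
rewrite !weight_config !mulf_div; apply: ler_pM.
- by rewrite mulr_ge0 ?bernoulli_prod_ge0 // p'_le1 (le_trans p_ge0).
- by rewrite invr_ge0 mulr_ge0 // ltW.
- exact: bernoulli_prod_holley.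
rewrite lef_pV2 ?posrE ?mulr_gt0 // -!sqrtrM // ler_sqrt ?mulr_ge0 //.
exact: (submod_setUI lap_det_gt0 lap_det_submod2 X Y).
Qed.

Lemma prob_config r (A : pred {ffun E -> bool}) : prob src tgt q r A =
  (\sum_(X | A (config X)) weight src tgt q r (config X)) /
  (\sum_X weight src tgt q r (config X)).
Proof. by rewrite /prob !(reindex config) //; apply: onW_bij; apply: config_bij. Qed.

End ConductanceModel.

Theorem lemma4p7 (R : rcfType) (V E : finType) (src tgt : E -> V)
  (q p p' : R) :
  simple_graph src tgt -> connected_graph src tgt ->
  1 <= q -> 0 <= p -> p <= p' -> p' <= 1 ->
  forall A : pred {ffun E -> bool}, increasing_event A ->
  prob src tgt q p A <= prob src tgt q p' A.
Proof.
move=> _ conn q_ge1 p_ge0 le_pp' p'_le1 A A_incr.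
have p01 : 0 <= p <= 1 by rewrite p_ge0 (le_trans le_pp').
have p'01 : 0 <= p' <= 1 by rewrite p'_le1 (le_trans p_ge0).
rewrite !prob_config; apply: holley_domination => [X|X|||X Y|X Y sXY].
- exact: weight_config_ge0.
- exact: weight_config_ge0.
- exact: sum_weight_config_gt0.
- exact: sum_weight_config_gt0.
- exact: weight_config_holley.
- by apply: A_incr => e; rewrite !ffunE; apply/implyP => /(subsetP sXY).
Qed.
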